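(* Let $T=(V,E)$ be an $X$-tree. Then $\mathrm{rk}^T(\mathcal{L})\le|E|-1$ for every bipartite $\mathcal{L}\subseteq\binom{X}{2}$. Moreover, for every bipartite $\mathcal{L}\subseteq\binom{X}{2}$ the following are equivalent: (i) $\mathrm{rk}^T(\mathcal{L})=|E|-1$; (ii) there is a cord $xy\in\binom{X}{2}$ such that $\mathcal{L}\cup\{xy\}$ is an edge-weight lasso for $T$; (iii) $\mathcal{L}$ is connected, and for every cord $xy$, $\mathcal{L}\cup\{xy\}$ is an edge-weight lasso for $T$ if and only if $\mathcal{L}\cup\{xy\}$ is not bipartite; (iv) $\mathcal{L}$ is connected, the closure $[\mathcal{L}]^T$ equals $A\vee B$ where $\{A,B\}$ is the (unique) bipartition of $X$ with $\mathcal{L}\subseteq A\vee B$, and $A\vee B$ is a hyperplane of $\mathbb{M}(T)$.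
   Context: Let $X$ be a finite set with $|X|=n\ge 3$. An $X$-tree is a finite tree $T=(V,E)$ whose set of degree-1 vertices is exactly $X$ and which has no vertices of degree $2$. A cord is a $2$-subset $xy$ of $X$. For each cord $xy$, $\lambda^T_{xy}:\mathbb{R}^E\to\mathbb{R}$, $\omega\mapsto\sum_{e\in E(x|y)}\omega(e)$, where $E(x|y)$ is the edge set of the path from $x$ to $y$. For $\mathcal{L}\subseteq\binom{X}{2}$, $\mathrm{rk}^T(\mathcal{L})$ is the dimension of the span of $\{\lambda^T_{xy}:xy\in\mathcal{L}\}$; $\mathbb{M}(T)$ is the matroid on $\binom{X}{2}$ with rank function $\mathrm{rk}^T$ (its rank is $|E|$). The closure of $\mathcal{L}$ is $[\mathcal{L}]^T=\{xy\in\binom{X}{2}:\mathrm{rk}^T(\mathcal{L}\cup\{xy\})=\mathrm{rk}^T(\mathcal{L})\}$; a hyperplane is a maximal subset of $\binom{X}{2}$ of rank less than $|E|$. An edge-weight lasso for $T$ is a set $\mathcal{L}$ with $\mathrm{rk}^T(\mathcal{L})=|E|$. $\mathcal{L}$ is called connected (resp. bipartite) if the graph $\Gamma(\mathcal{L})=(X,\mathcal{L})$ with vertex set $X$ and edge set $\mathcal{L}$ is connected (resp. bipartite). For disjoint $A,B\subseteq X$, $A\vee B:=\{ab:a\in A,b\in B\}$. *)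

From HB Require Import structures.
From mathcomp Require Import all_boot all_order all_algebra.
From Stdlib Require Import ClassicalEpsilon.
Set Implicit Arguments. Unset Strict Implicit. Unset Printing Implicit Defensive.
Import Order.TTheory GRing.Theory Num.Theory.

Section XTrees.
Variable V : finType.
Variable adj : rel V.

Definition tedges : {set {set V}} :=
  [set [set p.1; p.2] | p in [set p : V * V | adj p.1 p.2]].

Definition degree (v : V) : nat := #|[set u | adj v u]|.

Definition leaves : {set V} := [set v | degree v == 1].

Definition has_cycle : Prop :=
  exists (x : V) (p : seq V),
    [/\ 3 <= size p, path adj x p, last x p = x & uniq p].

Definition is_X_tree : Prop :=
  [/\ symmetric adj, irreflexive adj,
      (forall u v : V, connect adj u v), ~ has_cycle &
      (forall v : V, degree v != 2)].

Definition is_path_seq (x y : V) (p : seq V) : bool :=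
  [&& path adj x p, last x p == y & uniq (x :: p)].

Definition path_edges (x : V) (p : seq V) : seq {set V} :=
  map (fun q : V * V => [set q.1; q.2]) (zip (x :: p) p).

Definition on_path (x y : V) (e : {set V}) : Prop :=
  exists p : seq V, is_path_seq x y p /\ e \in path_edges x p.

Definition cords : {set {set V}} :=
  [set c : {set V} | (c \subset leaves) && (#|c| == 2)].

Definition on_cord_path (c e : {set V}) : Prop :=
  exists x y : V, [/\ c = [set x; y], x != y & on_path x y e].

Variable R : realFieldType.

(* lambda^T_{xy} as a vector in R^E; we regard R^E as the coordinate
   subspace of R^{set V} of functions supported on E (zero outside E). *)
Definition lam (c : {set V}) : {ffun {set V} -> R^o} :=
  [ffun e => if excluded_middle_informative (e \in tedges /\ on_cord_path c e)
             then (1%R : R) else 0%R].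

Definition rk (L : {set {set V}}) : nat :=
  \dim (<< [seq lam c | c <- enum L] >>%VS).

Definition lasso (L : {set {set V}}) : Prop := rk L = #|tedges|.

Definition Lclosure (L : {set {set V}}) : {set {set V}} :=
  [set c in cords | rk (c |: L) == rk L].

Definition hyperplane (H : {set {set V}}) : Prop :=
  [/\ H \subset cords, rk H < #|tedges| &
      forall H' : {set {set V}}, H' \subset cords -> H \proper H' ->
        #|tedges| <= rk H'].

Definition Lrel (L : {set {set V}}) : rel V := fun u v => [set u; v] \in L.

Definition L_connected (L : {set {set V}}) : Prop :=
  forall x y, x \in leaves -> y \in leaves -> connect (Lrel L) x y.

Definition L_bipartite (L : {set {set V}}) : Prop :=
  exists A : {set V}, forall c, c \in L -> #|c :&: A| = 1.

Definition vee (A B : {set V}) : {set {set V}} :=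
  [set [set a; b] | a in A, b in B].

End XTrees.

From Pilot Require Import Defs.
From HB Require Import structures.
From mathcomp Require Import all_boot all_order all_algebra.
From mathcomp Require Import zify.
From Stdlib Require Import ClassicalEpsilon.
Set Implicit Arguments. Unset Strict Implicit. Unset Printing Implicit Defensive.
Import Order.TTheory GRing.Theory Num.Theory.

(* Write e_z for the pendant edge of a leaf z.  The path between two leaves
   x, y uses e_z exactly when z is one of x, y, so lambda_xy(e_z) = [z in xy].
   Hence each g : X -> R induces a linear form
       psi_g(w) = sum_{z in X} g(z) w(e_z),
   with psi_g(lambda_xy) = g(x) + g(y) and psi_g(1_{e_z}) = g(z).

   If L is bipartite with side A, the sign function g = +1 on A, -1 off A
   annihilates every lambda_c (c in L) but not 1_{e_z}, so rk L < |E|.  If L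
   is moreover disconnected, restricting g to one component and to its
   complement gives two independent annihilators, so rk L <= |E| - 2.  A cord
   with both ends on the same side has psi_g(lambda_c) = +-2, so it raises
   the rank; a cord across the sides keeps L bipartite, so it never yields a
   lasso. *)

Local Open Scope ring_scope.

Lemma mem_zip_inv (S T : eqType) (s : seq S) (t : seq T) q :
  q \in zip s t -> (q.1 \in s) && (q.2 \in t).
Proof.
elim: s t => [|a s IH] [|b t] //=; rewrite inE => /orP [/eqP ->|/IH /andP [qs qt]].
  by rewrite !inE !eqxx.
by rewrite !inE qs qt !orbT.
Qed.

Section DimensionCounting.
Variables (K : fieldType) (vT : vectType K).

Lemma dim_addv_line_gt (S : {vspace vT}) v :
  v \notin S -> (\dim S < \dim (<[v]> + S))%N.
Proof.
move=> vNS; rewrite (ltn_leqif (dimv_leqif_sup (addvSr _ _))).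
by rewrite subv_add subvv andbT.
Qed.

Lemma dim_addv_line_le (S : {vspace vT}) v : (\dim (<[v]> + S) <= (\dim S).+1)%N.
Proof.
apply: leq_trans (dimv_add_leqif _ _) _.
by rewrite dim_vline -add1n leq_add2r leq_b1.
Qed.

Lemma dim_add2_le (S W : {vspace vT}) w1 w2 :
  (S <= W)%VS -> w1 \in W -> w2 \in W ->
  w1 \notin S -> w2 \notin (<[w1]> + S)%VS -> ((\dim S).+2 <= \dim W)%N.
Proof.
move=> sSW w1W w2W w1NS w2NS.
apply: leq_ltn_trans (dim_addv_line_gt w1NS) _.
apply: leq_trans (dim_addv_line_gt w2NS) (dimvS _).
by rewrite !subv_add sSW andbT -!memvE w1W w2W.
Qed.

End DimensionCounting.

Section CordRank.
Variables (V : finType) (adj : rel V) (R : realFieldType).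
Hypothesis adj_sym : symmetric adj.
Hypothesis adj_connected : forall u v : V, connect adj u v.
Hypothesis three_leaves : (3 <= #|leaves adj|)%N.

Local Notation X := (leaves adj).
Local Notation E := (tedges adj).
Implicit Types (A c : {set V}) (L H : {set {set V}}) (x y z : V).

Lemma leaf_nbr_uniq z w w' : z \in X -> adj z w -> adj z w' -> w = w'.
Proof.
rewrite inE /degree => /cards1P [u Nz] zw zw'.
have : w \in [set u | adj z u] by rewrite inE.
have : w' \in [set u | adj z u] by rewrite inE.
by rewrite Nz !inE => /eqP -> /eqP ->.
Qed.

Definition stem z := odflt z [pick w | adj z w].

Lemma adj_stem z : z \in X -> adj z (stem z).
Proof.
rewrite inE /degree => /cards1P [u Nz].
have : u \in [set w | adj z w] by rewrite Nz inE.
rewrite inE /stem => zu; case: pickP => [w //|/(_ u)]; by rewrite zu.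
Qed.

Definition pendant z : {set V} := [set z; stem z].

Lemma pendant_edge z : z \in X -> pendant z \in E.
Proof. by move=> Xz; apply/imsetP; exists (z, stem z); rewrite // inE adj_stem. Qed.

Lemma some_leaf : exists z, z \in X.
Proof. by apply/card_gt0P; apply: leq_trans three_leaves. Qed.

Lemma leaf_avoiding x y : exists z, [/\ z \in X, z != x & z != y].
Proof.
have : (0 < #|X :\: [set x; y]|)%N.
  rewrite cardsD ltn_subRL addn0; apply: leq_trans three_leaves.
  by rewrite ltnS (leq_trans (subset_leq_card (subsetIr _ _))) // cards2 ltnS leq_b1.
by case/card_gt0P => z; rewrite in_setD in_set2 negb_or => /andP [/andP [zx zy] Xz]; exists z.
Qed.

Lemma leaves_pigeon (P : pred V) :
  exists x y, [/\ x \in X, y \in X, x != y & P x = P y].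
Proof.
have [a Xa] := some_leaf; have [b [Xb ba _]] := leaf_avoiding a a.
have [c [Xc ca cb]] := leaf_avoiding a b.
have [Pab|Pab] := eqVneq (P a) (P b); first by exists a, b; split; rewrite // eq_sym.
have [Pac|Pac] := eqVneq (P a) (P c); first by exists a, c; split; rewrite // eq_sym.
exists b, c; split=> //; first by rewrite eq_sym.
by move: Pab Pac; case: (P a); case: (P b); case: (P c).
Qed.

(* Distinct leaves have distinct pendant edges: otherwise the two leaves
   would form a connected component missing a third leaf. *)
Lemma pendant_inj x y : x \in X -> y \in X -> pendant x = pendant y -> x = y.
Proof.
move=> Xx Xy exy; apply/eqP; apply: contraT => xy.
have x_stem : x = stem y.
  have : x \in pendant y by rewrite -exy set21.
  by rewrite !inE (negbTE xy) => /eqP.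
have y_stem : y = stem x.
  have : y \in pendant x by rewrite exy set21.
  by rewrite !inE eq_sym (negbTE xy) => /eqP.
have [z [Xz zx zy]] := leaf_avoiding x y.
have xy_closed : closed adj (mem [set x; y]).
  apply: (intro_closed (sym_connect_sym adj_sym)) => u v uv.
  rewrite !inE => /orP [] /eqP eq_u; subst u.
    by rewrite (leaf_nbr_uniq Xx uv (adj_stem Xx)) -y_stem eqxx orbT.
  by rewrite (leaf_nbr_uniq Xy uv (adj_stem Xy)) -x_stem eqxx.
have := closed_connect xy_closed (adj_connected x z).
by rewrite !inE eqxx /= (negbTE zx) (negbTE zy).
Qed.

Lemma on_path_pendant u v z : z \in X -> on_path adj u v (pendant z) -> (z == u) || (z == v).
Proof.
move=> Xz [p [/and3P [up /eqP last_p uniq_p] /mapP [q qp eq_q]]].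
have z_q : z \in [set q.1; q.2] by rewrite -eq_q set21.
have : z \in u :: p.
  have /andP [q1 q2] := mem_zip_inv qp.
  by move: z_q; rewrite in_set2 => /orP [] /eqP ->; rewrite ?inE ?q2 ?orbT.
rewrite inE => /orP [-> //|zp].
case/splitPr: zp up last_p uniq_p => p1 [|b p2] up last_p uniq_p.
  by rewrite last_cat /= in last_p; rewrite last_p eqxx orbT.
exfalso; rewrite cat_path /= in up; case/and4P: up => _ pred_z z_b _.
have : last u p1 != b.
  rewrite -cat_cons cat_uniq in uniq_p; case/and3P: uniq_p => _ disj _.
  apply/eqP => eq_b; move/hasPn: disj => /(_ b).
  by rewrite !inE eqxx orbT -eq_b -in_cons mem_last => /(_ isT).
by rewrite adj_sym in pred_z; rewrite (leaf_nbr_uniq Xz pred_z z_b) eqxx.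
Qed.

Lemma on_path_pendant_start u v : u \in X -> u != v -> on_path adj u v (pendant u).
Proof.
move=> Xu uv; have /connectP [p up last_p] := adj_connected u v.
case: (shortenP up) last_p => [[|w p'] up' uniq_p' _ last_p].
  by rewrite /= in last_p; rewrite last_p eqxx in uv.
exists (w :: p'); split; first by rewrite /is_path_seq up' uniq_p' -last_p eqxx.
case/andP: up' => uw _.
by rewrite /path_edges /= (leaf_nbr_uniq Xu uw (adj_stem Xu)) inE eqxx.
Qed.

Lemma cordP c : c \in cords adj ->
  exists x y, [/\ x \in X, y \in X, x != y & c = [set x; y]].
Proof.
rewrite inE => /andP [cX /cards2P [x [y [xy eq_c]]]]; subst c.
by exists x, y; split=> //; apply: (subsetP cX); rewrite !inE eqxx ?orbT.
Qed.

Lemma cord_of_leaves x y : x \in X -> y \in X -> x != y -> [set x; y] \in cords adj.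
Proof.
move=> Xx Xy xy; rewrite inE cards2 xy andbT.
by apply/subsetP => w; rewrite in_set2 => /orP [] /eqP ->.
Qed.

Lemma lam_pendant c z : c \in cords adj -> z \in X -> lam adj R c (pendant z) = (z \in c)%:R.
Proof.
move=> cc Xz; have [x [y [Xx Xy xy eq_c]]] := cordP cc.
rewrite /lam ffunE.
destruct (excluded_middle_informative _) as [[cE [x' [y' [eq_c' x'y' p]]]] | Np] => /=.
  by rewrite eq_c' !inE; case/orP: (on_path_pendant Xz p) => ->; rewrite ?orbT.
case z_c: (z \in c) => //; case: Np; split; first exact: pendant_edge.
move: z_c; rewrite eq_c !inE => /orP [] /eqP ->.
  by exists x, y; split=> //; apply: on_path_pendant_start.
by exists y, x; split; rewrite 1?setUC 1?eq_sym //; apply: on_path_pendant_start; rewrite // eq_sym.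
Qed.

Local Notation U := {ffun {set V} -> R^o}.
Local Notation lam := (lam adj R).
Local Notation rk := (rk adj R).

Definition ind (e : {set V}) : U := [ffun e' => (e' == e)%:R].
Definition edge_space : {vspace U} := <<[seq ind e | e <- enum E]>>%VS.
Definition cord_space L : {vspace U} := <<[seq lam c | c <- enum L]>>%VS.

Lemma scale_ffunE (a : R) (f : U) e : (a *: f) e = a * f e.
Proof. by rewrite ffunE. Qed.

Lemma rkE L : rk L = \dim (cord_space L). Proof. by []. Qed.

Lemma dim_edge_space : (\dim edge_space <= #|E|)%N.
Proof. by apply: leq_trans (dim_span _) _; rewrite size_map cardE. Qed.

Lemma ind_pendant_edge_space z : z \in X -> ind (pendant z) \in edge_space.
Proof. by move=> Xz; apply/memv_span/map_f; rewrite mem_enum pendant_edge. Qed.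

Lemma lam_edge_space c : lam c \in edge_space.
Proof.
have -> : lam c = \sum_(e in E) lam c e *: ind e.
  apply/ffunP => e'; rewrite sum_ffunE.
  under eq_bigr => e _ do rewrite scale_ffunE [ind _ _]ffunE.
  have [E_e'|NE_e'] := boolP (e' \in E).
    rewrite (bigD1 e') //= eqxx mulr1 big1 ?addr0 // => e /andP [_ ee'].
    by rewrite eq_sym (negbTE ee') mulr0.
  rewrite big1 => [|e E_e]; last first.
    by case: eqP => [eq_e|_]; [rewrite eq_e E_e in NE_e' | rewrite mulr0].
  rewrite /Defs.lam ffunE.
  by destruct (excluded_middle_informative _) as [[E_e' onp] | Nin]; rewrite // E_e' in NE_e'.
by apply: memv_suml => e E_e; apply/memvZ/memv_span/map_f; rewrite mem_enum.
Qed.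

Lemma cord_space_edge_space L : (cord_space L <= edge_space)%VS.
Proof. by apply/span_subvP => v /mapP [c _ ->]; apply: lam_edge_space. Qed.

Lemma rk_le_edges L : (rk L <= #|E|)%N.
Proof. exact: leq_trans (dimvS (cord_space_edge_space L)) dim_edge_space. Qed.

Lemma rk_mono L L' : L \subset L' -> (rk L <= rk L')%N.
Proof.
move=> sLL'; apply/dimvS/sub_span => v /mapP [c Lc ->]; apply: map_f.
by rewrite mem_enum (subsetP sLL') // -mem_enum.
Qed.

Lemma cord_space_setU1 c L : cord_space (c |: L) = (<[lam c]> + cord_space L)%VS.
Proof.
rewrite /cord_space -span_cons; apply: eq_span => v; rewrite inE.
apply/mapP/idP => [[d]|].
  rewrite mem_enum in_setU1 => /orP [/eqP -> ->|Ld ->]; first by rewrite eqxx.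
  by rewrite map_f ?orbT // mem_enum.
case/orP => [/eqP ->|/mapP [d Ld ->]]; first by exists c; rewrite // mem_enum setU11.
by exists d => //; rewrite mem_enum setU1r // -mem_enum.
Qed.

Lemma rk_setU1_le c L : (rk (c |: L) <= (rk L).+1)%N.
Proof. by rewrite !rkE cord_space_setU1 dim_addv_line_le. Qed.

Lemma rk_le_of_closure L H :
  (forall c, c \in H -> rk (c |: L) = rk L) -> (rk H <= rk L)%N.
Proof.
move=> H_cl; apply/dimvS/span_subvP => v /mapP [c Hc ->]; apply: contraT => NL.
have := dim_addv_line_gt NL; rewrite -cord_space_setU1 -!rkE H_cl ?ltnn //.
by rewrite -mem_enum.
Qed.

Definition leaf_form (g : V -> R) (f : U) : R^o := \sum_(z in X) g z * f (pendant z).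

Lemma leaf_form_linear g : linear (leaf_form g).
Proof.
move=> a u v; rewrite /leaf_form scaler_sumr -big_split /=; apply: eq_bigr => z _.
by rewrite !ffunE mulrDr mulrCA.
Qed.

HB.instance Definition _ g :=
  GRing.isLinear.Build _ _ _ _ (leaf_form g) (leaf_form_linear g).

Lemma leaf_form_lam g c : c \in cords adj -> leaf_form g (lam c) = \sum_(z in c) g z.
Proof.
move=> cc; have [x [y [Xx Xy xy eq_c]]] := cordP cc.
rewrite /leaf_form; under eq_bigr => z Xz do rewrite lam_pendant //.
rewrite eq_c (bigD1 x) //= set21 mulr1 (bigD1 y) /=; last by rewrite Xy eq_sym xy.
rewrite set22 mulr1 big1 ?addr0 => [|z /andP [/andP [_ zx] zy]].
  by rewrite big_setU1 ?inE // big_set1.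
by rewrite in_set2 (negbTE zx) (negbTE zy) mulr0.
Qed.

Lemma leaf_form_ind g z : z \in X -> leaf_form g (ind (pendant z)) = g z.
Proof.
move=> Xz; rewrite /leaf_form (bigD1 z) //= ffunE eqxx mulr1 big1 ?addr0 //.
move=> w /andP [Xw wz]; rewrite ffunE; case: eqP => [/pendant_inj eq_w|]; last by rewrite mulr0.
by rewrite eq_w ?eqxx in wz.
Qed.

Definition annihilates (g : V -> R) L :=
  forall c, c \in L -> leaf_form g (lam c) = 0.

Lemma cord_space_ker g L : annihilates g L -> (cord_space L <= lker (linfun (leaf_form g)))%VS.
Proof.
by move=> gL; apply/span_subvP => v /mapP [c Lc ->]; rewrite memv_ker lfunE /= gL // -mem_enum.
Qed.

Lemma leaf_form_cord_space g L f : annihilates g L -> f \in cord_space L -> leaf_form g f = 0.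
Proof. by move=> gL /(subvP (cord_space_ker gL)); rewrite memv_ker lfunE /= => /eqP. Qed.

Lemma ind_notin_cord_space g L z :
  annihilates g L -> z \in X -> g z != 0 -> ind (pendant z) \notin cord_space L.
Proof.
by move=> gL Xz gz; apply: contra gz => /(leaf_form_cord_space gL); rewrite leaf_form_ind // => ->.
Qed.

Lemma annihilator_rk_lt g L z : annihilates g L -> z \in X -> g z != 0 -> (rk L < #|E|)%N.
Proof.
move=> gL Xz gz; rewrite rkE; apply: leq_trans (dim_addv_line_gt (ind_notin_cord_space gL Xz gz)) _.
apply: leq_trans dim_edge_space; apply: dimvS.
by rewrite subv_add cord_space_edge_space andbT -memvE ind_pendant_edge_space.
Qed.

Lemma annihilators_rk_le g1 g2 L z1 z2 :
  annihilates g1 L -> annihilates g2 L -> z1 \in X -> z2 \in X ->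
  g1 z1 != 0 -> g2 z1 = 0 -> g2 z2 != 0 -> ((rk L).+2 <= #|E|)%N.
Proof.
move=> g1L g2L Xz1 Xz2 g1z1 g2z1 g2z2; rewrite rkE.
apply: leq_trans dim_edge_space.
apply: (dim_add2_le (cord_space_edge_space L) (ind_pendant_edge_space Xz1)
  (ind_pendant_edge_space Xz2) (ind_notin_cord_space g1L Xz1 g1z1)).
apply/negP => /memv_addP [_ /vlineP [k ->] [v Lv /(congr1 (leaf_form g2))]].
rewrite linearD linearZ /= !leaf_form_ind // g2z1 (leaf_form_cord_space g2L Lv).
by rewrite scaler0 addr0 => /eqP; rewrite (negbTE g2z2).
Qed.

Lemma annihilator_rk_gt g L c :
  annihilates g L -> leaf_form g (lam c) != 0 -> (rk L < rk (c |: L))%N.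
Proof.
move=> gL gc; rewrite !rkE cord_space_setU1; apply: dim_addv_line_gt.
by apply: contra gc => /(leaf_form_cord_space gL) ->.
Qed.

Definition bip_side L A :=
  forall c, c \in L -> #|c :&: A| = 1%N.

Lemma cross2 A x y : x != y ->
  (#|[set x; y] :&: A| == 1%N) = ((x \in A) != (y \in A)).
Proof.
move=> xy; rewrite setIUl.
have in_A w : w \in A -> [set w] :&: A = [set w].
  by move=> Aw; apply/setP => u; rewrite !inE; case: eqP => // ->.
have notin_A w : w \notin A -> [set w] :&: A = set0.
  by move=> NAw; apply/setP => u; rewrite !inE; case: eqP => // ->; rewrite (negbTE NAw).
case Ax: (x \in A); case Ay: (y \in A).
- by rewrite !in_A // cards2 xy.
- by rewrite in_A // notin_A ?Ay // setU0 cards1.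
- by rewrite notin_A ?Ax // in_A // set0U cards1.
- by rewrite !notin_A ?Ax ?Ay // setU0 cards0.
Qed.

Lemma bip_side_setU1 A c L :
  #|c :&: A| = 1%N -> bip_side L A -> bip_side (c |: L) A.
Proof. by move=> cA LA d; rewrite in_setU1 => /orP [/eqP -> //|]; apply: LA. Qed.

Definition sgn A z : R := if z \in A then 1 else -1.

Lemma sgn_neq0 A z : sgn A z != 0.
Proof. by rewrite /sgn; case: ifP => _; rewrite ?oppr_eq0 oner_eq0. Qed.

Lemma leaf_form_sgn A x y : x \in X -> y \in X -> x != y ->
  (leaf_form (sgn A) (lam [set x; y]) == 0) = ((x \in A) != (y \in A)).
Proof.
move=> Xx Xy xy; rewrite leaf_form_lam ?cord_of_leaves // big_setU1 ?inE // big_set1 /sgn.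
have two_neq0 : (1 + 1 : R) != 0 by rewrite paddr_eq0 ?ler01 // oner_eq0.
by case: (x \in A); case: (y \in A);
  rewrite /= ?addrN ?addNr ?eqxx // -?opprD ?oppr_eq0 (negbTE two_neq0).
Qed.

Lemma sgn_annihilates A L :
  L \subset cords adj -> bip_side L A -> annihilates (sgn A) L.
Proof.
move=> sL LA c Lc; have [x [y [Xx Xy xy eq_c]]] := cordP (subsetP sL c Lc).
by apply/eqP; rewrite eq_c leaf_form_sgn // -cross2 // -eq_c LA.
Qed.

Lemma bipartite_rk_lt L : L \subset cords adj -> L_bipartite L -> (rk L < #|E|)%N.
Proof.
move=> sL [A LA]; have [z Xz] := some_leaf.
exact: annihilator_rk_lt (sgn_annihilates sL LA) Xz (sgn_neq0 A z).
Qed.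

Lemma same_side_rk_gt A L x y :
  L \subset cords adj -> bip_side L A ->
  x \in X -> y \in X -> x != y -> (x \in A) = (y \in A) ->
  (rk L < rk ([set x; y] |: L))%N.
Proof.
move=> sL LA Xx Xy xy xAy; apply: annihilator_rk_gt (sgn_annihilates sL LA) _.
by rewrite leaf_form_sgn // xAy eqxx.
Qed.

Lemma Lrel_connect_sym L : connect_sym (Lrel L).
Proof. by apply: sym_connect_sym => u w; rewrite /Lrel setUC. Qed.

Lemma Lrel_cord L u w : L \subset cords adj -> Lrel L u w -> [/\ u \in X, w \in X & u != w].
Proof.
move=> sL uw; have := subsetP sL _ uw; rewrite inE cards2 eqSS eqb1 => /andP [sX uw'].
by split=> //; apply: (subsetP sX); rewrite !inE eqxx ?orbT.
Qed.

(* If the graph (X, L) is disconnected, the sign function restricted to one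
   component and to its complement are two annihilators, so rk L <= |E| - 2. *)
Lemma disconnected_rk_le A L x y : L \subset cords adj -> bip_side L A ->
  x \in X -> y \in X -> ~~ connect (Lrel L) x y -> ((rk L).+2 <= #|E|)%N.
Proof.
move=> sL LA Xx Xy xNy.
pose g (b : bool) z := if connect (Lrel L) x z == b then sgn A z else 0.
have gL b : annihilates (g b) L.
  move=> c Lc; have [u [w [Xu Xw uw eq_c]]] := cordP (subsetP sL c Lc).
  have comp_uw : connect (Lrel L) x u = connect (Lrel L) x w.
    by apply: (connect_closed (Lrel_connect_sym L)); rewrite /Lrel -eq_c.
  rewrite leaf_form_lam ?(subsetP sL) // eq_c big_setU1 ?inE //= big_set1 /g comp_uw.
  case: (connect (Lrel L) x w == b); last by rewrite addr0.
  have := sgn_annihilates sL LA Lc.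
  by rewrite leaf_form_lam ?(subsetP sL) // eq_c big_setU1 ?inE //= big_set1.
apply: (annihilators_rk_le (gL true) (gL false) Xx Xy);
  by rewrite /g ?connect0 ?(negbTE xNy) /= ?sgn_neq0.
Qed.

(* Along every cord of L both sides A and A' of L flip, so in a connected L
   membership in A and in A' agree either everywhere or nowhere. *)
Lemma same_side_not_bipartite A L x y :
  L_connected adj L -> L \subset cords adj -> bip_side L A ->
  x \in X -> y \in X -> x != y -> (x \in A) = (y \in A) ->
  ~ L_bipartite ([set x; y] |: L).
Proof.
move=> Lconn sL LA Xx Xy xy xAy [A' LA'].
pose agree := [pred z | (z \in A) == (z \in A')].
have agree_closed : closed (Lrel L) agree.
  move=> u w uw; have [Xu Xw u_w] := Lrel_cord sL uw.
  move/eqP: (LA _ uw); move/eqP: (LA' _ (setU1r _ uw)); rewrite !cross2 // !inE.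
  by case: (u \in A); case: (w \in A); case: (u \in A'); case: (w \in A').
move/eqP: (LA' _ (setU11 _ _)); rewrite cross2 // /=.
move: (closed_connect agree_closed (Lconn x y Xx Xy)); rewrite !inE xAy.
by case: (y \in A); case: (x \in A'); case: (y \in A').
Qed.

Lemma vee_mem A B c : A :|: B = X -> A :&: B = set0 ->
  (c \in vee A B) = (c \in cords adj) && (#|c :&: A| == 1%N).
Proof.
move=> AB_X AB_0; apply/idP/idP.
  case/imset2P => a b Aa Bb ->.
  have NAb : b \notin A.
    apply/negP => Ab; have : b \in A :&: B by rewrite inE Ab Bb.
    by rewrite AB_0 inE.
  have ab : a != b by apply: contraNneq NAb => <-.
  rewrite cord_of_leaves ?cross2 ?Aa ?NAb // -AB_X inE ?Aa ?Bb ?orbT //.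
case/andP => cc; have [x [y [Xx Xy xy ->]]] := cordP cc; rewrite cross2 //.
have side w : w \in X -> w \notin A -> w \in B by rewrite -AB_X inE => /orP [->|].
case Ax: (x \in A) => /= Ay.
  by apply/imset2P; exists x y; rewrite ?side ?Ay.
by rewrite setUC; apply/imset2P; exists y x; rewrite ?side ?Ax //; apply/negbNE.
Qed.

Lemma connected_sides A L : L_connected adj L -> L \subset cords adj -> bip_side L A ->
  X :&: A != set0 /\ X :\: A != set0.
Proof.
move=> Lconn sL LA; have [x [y [Xx Xy xy _]]] := leaves_pigeon predT.
have /connectP [[|w p] /= xp last_p] := Lconn x y Xx Xy; first by rewrite -last_p eqxx in xy.
case/andP: xp => xw _; have [_ Xw x_w] := Lrel_cord sL xw.
move/eqP: (LA _ xw); rewrite cross2 //.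
case Ax: (x \in A); case Aw: (w \in A) => //= _; split; apply/set0Pn.
- by exists x; rewrite inE Xx Ax.
- by exists w; rewrite inE Xw Aw.
- by exists w; rewrite inE Xw Aw.
- by exists x; rewrite inE Xx Ax.
Qed.

Lemma setU1_cords c L : c \in cords adj -> L \subset cords adj -> c |: L \subset cords adj.
Proof. by move=> cc sL; rewrite subUset sub1set cc sL. Qed.

Definition extends_to_lasso L := exists c, c \in cords adj /\ lasso adj R (c |: L).

Definition lasso_iff_nonbipartite L :=
  L_connected adj L /\
  forall c, c \in cords adj -> (lasso adj R (c |: L) <-> ~ L_bipartite (c |: L)).

Definition closure_bipartite_hyperplane L :=
  L_connected adj L /\
  exists A B : {set V},
    [/\ [/\ A :|: B = X, A :&: B = set0, A != set0 & B != set0],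
        L \subset vee A B, Lclosure adj R L = vee A B & hyperplane adj R (vee A B)].

Section Equivalences.
Variables (L : {set {set V}}) (A0 : {set V}).
Hypothesis sL : L \subset cords adj.
Hypothesis LA0 : bip_side L A0.

Lemma rkL_lt : (rk L < #|E|)%N.
Proof. by apply: bipartite_rk_lt sL _; exists A0. Qed.

(* (i) -> (ii): add a cord with both ends on the same side of A0. *)
Lemma corank1_extends : rk L = (#|E| - 1)%N -> extends_to_lasso L.
Proof.
move=> rkL; have [x [y [Xx Xy xy xAy]]] := leaves_pigeon (fun z => z \in A0).
exists [set x; y]; split; first exact: cord_of_leaves.
have := same_side_rk_gt sL LA0 Xx Xy xy xAy; have := rk_le_edges ([set x; y] |: L).
rewrite /lasso; lia.
Qed.

(* (ii) -> (i): one cord raises the rank by at most one. *)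
Lemma extends_corank1 : extends_to_lasso L -> rk L = (#|E| - 1)%N.
Proof.
move=> [c [_ lasso_c]]; have := rk_setU1_le c L; have := rkL_lt.
by rewrite /lasso in lasso_c; lia.
Qed.

(* (i) -> (iii): corank one forces connectivity; a cord across the sides
   keeps L bipartite, a cord within a side raises the rank to |E|. *)
Lemma corank1_lasso_iff : rk L = (#|E| - 1)%N -> lasso_iff_nonbipartite L.
Proof.
move=> rkL; split=> [x y Xx Xy|c cc].
  apply: contraT => xNy; have := disconnected_rk_le sL LA0 Xx Xy xNy.
  by have := rkL_lt; lia.
split=> [lasso_c bip_c|nbip_c].
  by have := bipartite_rk_lt (setU1_cords cc sL) bip_c; rewrite lasso_c ltnn.
have [x [y [Xx Xy xy eq_c]]] := cordP cc.
have [xAy|xNAy] := eqVneq (x \in A0) (y \in A0).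
  have := same_side_rk_gt sL LA0 Xx Xy xy xAy; have := rk_le_edges (c |: L).
  by rewrite /lasso eq_c; lia.
case: nbip_c; exists A0; apply: bip_side_setU1 => //.
by apply/eqP; rewrite eq_c cross2.
Qed.

(* (iii) -> (ii): a cord within a side is not bipartite, hence a lasso. *)
Lemma lasso_iff_extends : lasso_iff_nonbipartite L -> extends_to_lasso L.
Proof.
move=> [Lconn lasso_iff]; have [x [y [Xx Xy xy xAy]]] := leaves_pigeon (fun z => z \in A0).
have cc := cord_of_leaves Xx Xy xy.
exists [set x; y]; split=> //; apply/(lasso_iff _ cc).
exact: same_side_not_bipartite xAy.
Qed.

Definition sideA := X :&: A0.
Definition sideB := X :\: A0.

Lemma sides_partition : sideA :|: sideB = X /\ sideA :&: sideB = set0.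
Proof.
split; first exact: setID.
by apply/setP => z; rewrite !inE; case: (z \in A0); rewrite ?andbF ?andbT ?andNb.
Qed.

Lemma vee_sidesE c : (c \in vee sideA sideB) = (c \in cords adj) && (#|c :&: A0| == 1%N).
Proof.
have [AB_X AB_0] := sides_partition; rewrite vee_mem //.
case cc: (c \in cords adj) => //=; move: cc; rewrite inE => /andP [cX _].
by rewrite /sideA setIA (setIidPl cX).
Qed.

Lemma L_sub_vee : L \subset vee sideA sideB.
Proof. by apply/subsetP => c Lc; rewrite vee_sidesE (subsetP sL) //= LA0. Qed.

(* A cord outside A v B has both ends on one side, so it raises the rank. *)
Lemma outside_vee_rk_gt c : c \in cords adj -> c \notin vee sideA sideB ->
  (rk L < rk (c |: L))%N.
Proof.
move=> cc; rewrite vee_sidesE cc /=; have [x [y [Xx Xy xy eq_c]]] := cordP cc.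
by rewrite eq_c cross2 // negbK => /eqP; apply: same_side_rk_gt.
Qed.

Hypothesis rkL : rk L = (#|E| - 1)%N.

Lemma closure_vee : Lclosure adj R L = vee sideA sideB.
Proof.
apply/setP => c; rewrite inE; case cc: (c \in cords adj) => /=; last by rewrite vee_sidesE cc.
have [c_vee|c_out] := boolP (c \in vee sideA sideB).
  have bip_c : L_bipartite (c |: L).
    by exists A0; apply: bip_side_setU1 => //; apply/eqP; move: c_vee; rewrite vee_sidesE => /andP [].
  have le_rk : (rk L <= rk (c |: L))%N by apply/rk_mono/subsetUr.
  have lt_rk : (rk (c |: L) < #|E|)%N by apply: bipartite_rk_lt bip_c; apply: setU1_cords.
  have -> : rk (c |: L) = rk L by lia.
  exact: eqxx.
by apply/negbTE; rewrite neq_ltn orbC outside_vee_rk_gt.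
Qed.

Lemma vee_hyperplane : hyperplane adj R (vee sideA sideB).
Proof.
have vee_cords : vee sideA sideB \subset cords adj.
  by apply/subsetP => c; rewrite vee_sidesE => /andP [].
split=> //.
  by apply: bipartite_rk_lt vee_cords _; exists A0 => c; rewrite vee_sidesE => /andP [_ /eqP].
move=> H H_cords /properP [vee_H [c Hc c_out]].
have sub_H : c |: L \subset H by rewrite subUset sub1set Hc (subset_trans L_sub_vee vee_H).
have le_H : (rk (c |: L) <= rk H)%N := rk_mono sub_H.
have gt_L : (rk L < rk (c |: L))%N := outside_vee_rk_gt (subsetP H_cords c Hc) c_out.
lia.
Qed.

Lemma corank1_closure : closure_bipartite_hyperplane L.
Proof.
have [Lconn _] := corank1_lasso_iff rkL.
have [A_ne B_ne] := connected_sides Lconn sL LA0.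
have [AB_X AB_0] := sides_partition.
split=> //; exists sideA, sideB.
by split; [split | exact: L_sub_vee | exact: closure_vee | exact: vee_hyperplane].
Qed.

End Equivalences.

(* (iv) -> (i): A v B lies in the closure of L, so rk (A v B) <= rk L; a
   cord within a side of A is outside the hyperplane A v B, so adding it to
   A v B reaches rank |E|.  Bipartiteness of L follows from L in A v B. *)
Lemma closure_corank1 L : closure_bipartite_hyperplane L -> rk L = (#|E| - 1)%N.
Proof.
move=> [_ [A [B [[AB_X AB_0 _ _] L_vee clL [vee_cords _ vee_max]]]]].
have sL := subset_trans L_vee vee_cords.
have bipL : L_bipartite L.
  by exists A => c /(subsetP L_vee); rewrite vee_mem // => /andP [_ /eqP].
have [x [y [Xx Xy xy xAy]]] := leaves_pigeon (fun z => z \in A).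
have cc := cord_of_leaves Xx Xy xy.
have c_out : [set x; y] \notin vee A B by rewrite vee_mem // cc cross2 // xAy eqxx.
have ge_E : (#|E| <= rk ([set x; y] |: vee A B))%N.
  by apply: vee_max; [apply: setU1_cords | apply: properUr; rewrite sub1set].
have le_add : (rk ([set x; y] |: vee A B) <= (rk (vee A B)).+1)%N := rk_setU1_le _ _.
have le_cl : (rk (vee A B) <= rk L)%N.
  by apply: rk_le_of_closure => c; rewrite -clL inE => /andP [_ /eqP].
have lt_E : (rk L < #|E|)%N := bipartite_rk_lt sL bipL.
lia.
Qed.

End CordRank.

Local Close Scope ring_scope.

Theorem mainTheorem9 (V : finType) (adj : rel V) (R : realFieldType) :
  is_X_tree adj -> 3 <= #|leaves adj| ->
  forall L : {set {set V}}, L \subset cords adj -> L_bipartite L ->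
  let E := tedges adj in
  let rkL := rk adj R in
  rkL L <= #|E| - 1 /\
  [/\ (rkL L = #|E| - 1 <->
       exists c, c \in cords adj /\ lasso adj R (c |: L)),
      ((exists c, c \in cords adj /\ lasso adj R (c |: L)) <->
       (L_connected adj L /\
        forall c, c \in cords adj ->
          (lasso adj R (c |: L) <-> ~ L_bipartite (c |: L)))) &
      ((L_connected adj L /\
        forall c, c \in cords adj ->
          (lasso adj R (c |: L) <-> ~ L_bipartite (c |: L))) <->
       (L_connected adj L /\
        exists A B : {set V},
          [/\ [/\ A :|: B = leaves adj, A :&: B = set0, A != set0 & B != set0],
              L \subset vee A B,
              Lclosure adj R L = vee A B &
              hyperplane adj R (vee A B)]))].
Proof.
move=> [adj_sym _ adj_connected _ _] three_leaves L sL [A0 LA0] /=.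
have rk_lt : rk adj R L < #|tedges adj| by apply: rkL_lt LA0.
have i_ii : rk adj R L = #|tedges adj| - 1 -> extends_to_lasso adj R L.
  exact: corank1_extends LA0.
have ii_i : extends_to_lasso adj R L -> rk adj R L = #|tedges adj| - 1.
  exact: extends_corank1 LA0.
have i_iii : rk adj R L = #|tedges adj| - 1 -> lasso_iff_nonbipartite adj R L.
  exact: corank1_lasso_iff LA0.
have iii_ii : lasso_iff_nonbipartite adj R L -> extends_to_lasso adj R L.
  exact: lasso_iff_extends LA0.
have i_iv : rk adj R L = #|tedges adj| - 1 -> closure_bipartite_hyperplane adj R L.
  exact: corank1_closure LA0.
have iv_i : closure_bipartite_hyperplane adj R L -> rk adj R L = #|tedges adj| - 1.
  exact: closure_corank1.
split; first by rewrite leq_subRL ?add1n // (leq_ltn_trans (leq0n _) rk_lt).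
split; split=> [cond|cond].
- exact: i_ii.
- exact: ii_i.
- exact: i_iii (ii_i cond).
- exact: iii_ii.
- exact: i_iv (ii_i (iii_ii cond)).
- exact: i_iii (iv_i cond).
Qed.
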